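(* Let $V$ be a real vector space of dimension $m\ge3$ with a non-degenerate symmetric inner product of arbitrary signature, and let $R$ be an algebraic curvature tensor on $V$. The following are equivalent: (1) $R$ is $1$ Osserman; (2) for every $x\in\mathcal{N}$, every $y\in V_{\mathbb{C}}$, and every $k\ge1$, $\operatorname{trace}\{\mathcal{J}_R(x+ty)^k\}=O(t^k)$ as $t\downarrow0$.
   Context: An algebraic curvature tensor is $R\in\otimes^4V^*$ with $R(x,y,z,w)=R(z,w,x,y)=-R(y,x,z,w)$ and $R(x,y,z,w)+R(y,z,x,w)+R(z,x,y,w)=0$. The Jacobi operator is defined by $(\mathcal{J}_R(x)y,w)=R(y,x,x,w)$. $R$ is $1$ Osserman if the eigenvalues of $\mathcal{J}_R(x)$ are constant on each of the pseudo-spheres $\{x\in V:(x,x)=1\}$ and $\{x\in V:(x,x)=-1\}$ (equivalently, for each $k$ there is a constant $c_k$ with $\operatorname{trace}\{\mathcal{J}_R(x)^k\}=c_k(x,x)^k$ for all $x\in V$). Everything is extended complex-multilinearly to $V_{\mathbb{C}}=V\otimes\mathbb{C}$; $\mathcal{N}=\{v\in V_{\mathbb{C}}:(v,v)=0\}$. *)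

From HB Require Import structures.
From mathcomp Require Import all_boot all_order all_algebra.
From mathcomp Require Import reals complex.
Set Implicit Arguments. Unset Strict Implicit. Unset Printing Implicit Defensive.
Import Order.TTheory GRing.Theory Num.Theory.
Local Open Scope ring_scope.

(* V = 'rV[F]_m (row vectors in a fixed basis).  A 4-tensor on V is given by
   its components in that basis; the associated multilinear form is
   T(x,y,z,w) = \sum_{i,j,k,l} T i j k l x_i y_j z_k w_l. *)
Definition tensor4 (F : Type) (m : nat) := 'I_m -> 'I_m -> 'I_m -> 'I_m -> F.

Definition tensor_eval (F : comRingType) (m : nat) (T : tensor4 F m)
  (x y z w : 'rV[F]_m) : F :=
  \sum_(i < m) \sum_(j < m) \sum_(k < m) \sum_(l < m)
     T i j k l * x 0 i * y 0 j * z 0 k * w 0 l.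

Definition ip (F : comRingType) (m : nat) (G : 'M[F]_m) (x y : 'rV[F]_m) : F :=
  (x *m G *m y^T) 0 0.

Definition nondeg_sym_form (F : comUnitRingType) (m : nat) (G : 'M[F]_m) : Prop :=
  G^T = G /\ G \in unitmx.

Definition is_act (F : comRingType) (m : nat) (T : tensor4 F m) : Prop :=
  forall x y z w : 'rV[F]_m,
    tensor_eval T x y z w = tensor_eval T z w x y /\
    tensor_eval T x y z w = - tensor_eval T y x z w /\
    tensor_eval T x y z w + tensor_eval T y z x w + tensor_eval T z x y w = 0.

(* Jacobi operator J_T(x), acting on row vectors by y |-> y *m J_T(x);
   it is the unique matrix with (J_T(x) y, w) = T(y,x,x,w) for all y, w
   (when G is invertible):  J = M G^{-1} with M_{il} = T(e_i,x,x,e_l). *)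
Definition jacobi_op (F : fieldType) (m : nat) (G : 'M[F]_m) (T : tensor4 F m)
  (x : 'rV[F]_m) : 'M[F]_m :=
  (\matrix_(i < m, l < m) tensor_eval T (delta_mx 0 i) x x (delta_mx 0 l))
    *m invmx G.

(* 1-Osserman (trace characterization given in the paper's definition). *)
Definition osserman1 (F : fieldType) (m : nat) (G : 'M[F]_m) (T : tensor4 F m) : Prop :=
  exists c : nat -> F, forall (k : nat) (x : 'rV[F]_m),
    \tr (jacobi_op G T x ^+ k) = c k * (ip G x x) ^+ k.

Definition cplx (R : rcfType) (r : R) : R[i] := Complex r 0.
Definition cplx_mx (R : rcfType) (m n : nat) (A : 'M[R]_(m, n)) : 'M[R[i]]_(m, n) :=
  map_mx (@cplx R) A.
Definition cplx_tensor (R : rcfType) (m : nat) (T : tensor4 R m) : tensor4 R[i] m :=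
  fun i j k l => cplx (T i j k l).

Definition bigO_pow_at0plus (R : rcfType) (f : R -> R[i]) (k : nat) : Prop :=
  exists (C delta : R), 0 < delta /\
    forall t : R, 0 < t -> t < delta -> `|f t| <= cplx (C * t ^+ k).

From HB Require Import structures.
From mathcomp Require Import all_boot all_order all_algebra.
From mathcomp Require Import reals complex.
From mathcomp Require Import ring lra zify.
Import Order.TTheory GRing.Theory Num.Theory.
Set Implicit Arguments. Unset Strict Implicit. Unset Printing Implicit Defensive.
Local Open Scope ring_scope.

(* (1) => (2): the identity tr J(x)^k = c_k (x,x)^k is polynomial in x, so it
   persists on V_C; for null x, (x + ty, x + ty) = t (2(x,y) + t(y,y)), whence
   tr J(x + ty)^k = O(t^k).
   (2) => (1): for null u, v the polynomial s |-> tr J(u + sv)^k has no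
   coefficient below degree k by (2), and, being the reciprocal of degree 2k of
   s |-> tr J(v + su)^k, none above degree k either.  Hence
   tr J(au + bv)^k = c (ab)^k, while (au + bv, au + bv) = 2ab(u,v).  Every
   nondegenerate plane of V_C has a null basis, so tr J(z)^k (x0,x0)^k =
   tr J(x0)^k (z,z)^k whenever span(x0, z) is nondegenerate, and a polynomial
   identity along a line extends this to all z.  Only the fact that J(x) is
   quadratic in x is used, never the curvature identities of T. *)

Lemma map_tensor_eval (F1 F2 : comNzRingType) (f : {rmorphism F1 -> F2}) (m : nat)
    (T1 : tensor4 F1 m) (T2 : tensor4 F2 m) (x y z w : 'rV[F1]_m) :
  (forall i j k l, f (T1 i j k l) = T2 i j k l) ->
  f (tensor_eval T1 x y z w) =
  tensor_eval T2 (map_mx f x) (map_mx f y) (map_mx f z) (map_mx f w).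
Proof.
move=> fT.
rewrite /tensor_eval rmorph_sum; apply: eq_bigr => i _.
rewrite rmorph_sum; apply: eq_bigr => j _.
rewrite rmorph_sum; apply: eq_bigr => k _.
rewrite rmorph_sum; apply: eq_bigr => l _.
by rewrite !rmorphM !mxE fT.
Qed.

Section JacobiTrace.
Variables (F : fieldType) (m : nat) (G : 'M[F]_m) (T : tensor4 F m).

Definition jacobi_trace (k : nat) (x : 'rV[F]_m) : F := \tr (jacobi_op G T x ^+ k).

Definition qform (x : 'rV[F]_m) : F := ip G x x.

Definition gram_det (x y : 'rV[F]_m) : F := qform x * qform y - ip G x y ^+ 2.

Lemma tensor_eval_scale23 (x y z w : 'rV[F]_m) (s : F) :
  tensor_eval T x (s *: y) (s *: z) w = s ^+ 2 * tensor_eval T x y z w.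
Proof.
rewrite /tensor_eval mulr_sumr; apply: eq_bigr => i _.
rewrite mulr_sumr; apply: eq_bigr => j _.
rewrite mulr_sumr; apply: eq_bigr => k _.
rewrite mulr_sumr; apply: eq_bigr => l _.
rewrite !mxE; ring.
Qed.

Lemma jacobi_opZ (s : F) (x : 'rV[F]_m) :
  jacobi_op G T (s *: x) = s ^+ 2 *: jacobi_op G T x.
Proof.
rewrite /jacobi_op scalemxAl; congr (_ *m _).
by apply/matrixP => i j; rewrite !mxE tensor_eval_scale23.
Qed.

Lemma exprZn_mx (n : nat) (a : F) (A : 'M[F]_n) (k : nat) :
  (a *: A) ^+ k = a ^+ k *: A ^+ k.
Proof.
elim: k => [|k IH]; first by rewrite !expr0 scale1r.
by rewrite !exprS IH -!mulmxE -scalemxAl -scalemxAr scalerA.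
Qed.

Lemma jacobi_traceZ (k : nat) (s : F) (x : 'rV[F]_m) :
  jacobi_trace k (s *: x) = s ^+ (2 * k) * jacobi_trace k x.
Proof. by rewrite /jacobi_trace jacobi_opZ exprZn_mx mxtraceZ exprM. Qed.

Lemma ipDl x y z : ip G (x + y) z = ip G x z + ip G y z.
Proof. by rewrite /ip !mulmxDl mxE. Qed.

Lemma ipZl (a : F) x y : ip G (a *: x) y = a * ip G x y.
Proof. by rewrite /ip -!scalemxAl mxE. Qed.

Lemma ipDr x y z : ip G x (y + z) = ip G x y + ip G x z.
Proof. by rewrite /ip linearD /= mulmxDr mxE. Qed.

Lemma ipZr (a : F) x y : ip G x (a *: y) = a * ip G x y.
Proof. by rewrite /ip linearZ /= -scalemxAr mxE. Qed.

Hypothesis G_sym : G^T = G.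

Lemma ipC x y : ip G x y = ip G y x.
Proof.
rewrite /ip; have -> : y *m G *m x^T = (x *m G *m y^T)^T.
  by rewrite !trmx_mul trmxK G_sym mulmxA.
by rewrite [RHS]mxE.
Qed.

Lemma qformD x y : qform (x + y) = qform x + 2 * ip G x y + qform y.
Proof. by rewrite /qform ipDl !ipDr (ipC y x); ring. Qed.

Lemma qformZ (a : F) x : qform (a *: x) = a ^+ 2 * qform x.
Proof. by rewrite /qform ipZl ipZr mulrA. Qed.

Definition qform_poly (a b : 'rV[F]_m) : {poly F} :=
  (qform a)%:P + (2 * ip G a b) *: 'X + qform b *: 'X^2.

Lemma horner_qform_poly a b s : (qform_poly a b).[s] = qform (a + s *: b).
Proof.
by rewrite qformD qformZ ipZr !(hornerD, hornerZ, hornerC, hornerX, hornerXn); ring.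
Qed.

End JacobiTrace.

Section JacobiPoly.
Variables (F : fieldType) (m : nat) (G : 'M[F]_m) (T : tensor4 F m).

Definition jacobi_poly (a b : 'rV[F]_m) : 'M[{poly F}]_m :=
  let x := map_mx polyC a + 'X *: map_mx polyC b in
  \matrix_(i < m, l < m)
     tensor_eval (fun i j k l => (T i j k l)%:P) (delta_mx 0 i) x x (delta_mx 0 l)
  *m map_mx polyC (invmx G).

Definition jacobi_trace_poly (k : nat) (a b : 'rV[F]_m) : {poly F} :=
  \tr (jacobi_poly a b ^+ k).

Lemma horner_jacobi_trace_poly k a b s :
  (jacobi_trace_poly k a b).[s] = jacobi_trace G T k (a + s *: b).
Proof.
have polyCK n1 n2 (A : 'M[F]_(n1, n2)) : map_mx (horner_eval s) (map_mx polyC A) = A.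
  by apply/matrixP => i j; rewrite !mxE /horner_eval hornerC.
rewrite -[_.[s]]/(horner_eval s _) -trace_map_mx rmorphXn; congr (\tr (_ ^+ _)).
rewrite -[LHS]/(map_mx (horner_eval s) (jacobi_poly a b)) map_mxM polyCK.
congr (_ *m _); apply/matrixP => i l; rewrite !mxE.
rewrite (map_tensor_eval (T2 := T)) => [|*]; last exact: hornerC.
suff -> : map_mx (horner_eval s) (map_mx polyC a + 'X *: map_mx polyC b) = a + s *: b.
  by rewrite !map_delta_mx.
apply/rowP => j; rewrite !mxE /horner_eval hornerD hornerC.
by rewrite [_ * _]mulrC hornerCM hornerX mulrC.
Qed.

End JacobiPoly.

Section Transfer.
Variables (F1 F2 : fieldType) (f : {rmorphism F1 -> F2}) (m : nat).
Variables (G : 'M[F1]_m) (T : tensor4 F1 m).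

Let Tf : tensor4 F2 m := fun i j k l => f (T i j k l).

Lemma map_jacobi_op x :
  map_mx f (jacobi_op G T x) = jacobi_op (map_mx f G) Tf (map_mx f x).
Proof.
rewrite /jacobi_op map_mxM map_invmx; congr (_ *m _).
by apply/matrixP => i l; rewrite !mxE (map_tensor_eval (T2 := Tf)) // !map_delta_mx.
Qed.

Lemma map_jacobi_trace k x :
  f (jacobi_trace G T k x) = jacobi_trace (map_mx f G) Tf k (map_mx f x).
Proof. by rewrite -trace_map_mx rmorphXn; congr (\tr (_ ^+ _)); exact: map_jacobi_op. Qed.

Lemma map_ip (S : 'M[F1]_m) x y :
  f (ip S x y) = ip (map_mx f S) (map_mx f x) (map_mx f y).
Proof. by rewrite /ip map_trmx -!map_mxM [RHS]mxE. Qed.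

End Transfer.

Section NondegenerateForm.
Variables (F : numFieldType) (m : nat).

Lemma ip_delta (S : 'M[F]_m) i j : ip S (delta_mx 0 i) (delta_mx 0 j) = S i j.
Proof. by rewrite /ip -rowE trmx_delta -colE !mxE. Qed.

Lemma exists_qform_neq0 (S : 'M[F]_m) :
  S^T = S -> S != 0 -> exists x, qform S x != 0.
Proof.
move=> S_sym S0.
have /existsP[i /existsP[j Sij]] : [exists i, exists j, S i j != 0].
  apply: contraNT S0 => /existsPn S0; apply/eqP/matrixP => i j.
  by move/existsPn: (S0 i) => /(_ j)/negPn/eqP ->; rewrite mxE.
have [Si|] := eqVneq (qform S (delta_mx 0 i)) 0; last by exists (delta_mx 0 i).
have [Sj|] := eqVneq (qform S (delta_mx 0 j)) 0; last by exists (delta_mx 0 j).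
exists (delta_mx 0 i + delta_mx 0 j).
by rewrite qformD // Si Sj ip_delta add0r addr0 mulf_neq0 ?pnatr_eq0.
Qed.

Lemma exists_gram_det_neq0 (G : 'M[F]_m) x :
  (2 <= m)%N -> G^T = G -> G \in unitmx -> qform G x != 0 ->
  exists w, gram_det G x w != 0.
Proof.
move=> m2 G_sym G_unit Gx.
pose g := x *m G; pose D := qform G x *: G - g^T *m g.
have D_sym : D^T = D by rewrite /D linearB /= linearZ /= trmx_mul trmxK G_sym.
have qformD_gram w : qform D w = gram_det G x w.
  have -> : qform D w = qform G x * qform G w - ip (g^T *m g) w w.
    rewrite {1}/qform {1}/ip /D mulmxBr mulmxBl -scalemxAr -scalemxAl.
    by rewrite mxE [X in X + _]mxE [X in _ + X]mxE.
  rewrite [ip _ w w]/ip.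
  have -> : w *m (g^T *m g) *m w^T = (g *m w^T)^T *m (g *m w^T).
    by rewrite [(g *m _)^T]trmx_mul trmxK !mulmxA.
  by rewrite /gram_det [in LHS]mxE big_ord1 mxE.
have D0 : D != 0.
  apply: contraTneq m2 => /eqP; rewrite subr_eq0 => /eqP D0; rewrite -ltnNge ltnS.
  have <- : \rank (qform G x *: G) = m by rewrite mxrank_scale_nz // mxrank_unit.
  by rewrite D0 mulmx_max_rank.
have [w Dw] := exists_qform_neq0 D_sym D0.
by exists w; rewrite -qformD_gram.
Qed.

End NondegenerateForm.

Section PolyIdentities.
Variable F : numFieldType.

Lemma poly_eq_pos_nat (p q : {poly F}) :
  (forall n : nat, p.[n.+1%:R] = q.[n.+1%:R]) -> p = q.
Proof.
move=> pq; apply/eqP; rewrite -subr_eq0; apply/negPn/negP => pq0.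
pose rs := [seq n.+1%:R : F | n <- iota 0 (size (p - q))].
have roots : all (root (p - q)) rs.
  by apply/allP => _ /mapP[n _ ->]; rewrite /root hornerD hornerN pq subrr.
have rs_uniq : uniq rs.
  by rewrite map_inj_uniq ?iota_uniq // => a b /eqP; rewrite eqr_nat => /eqP [].
by have := max_poly_roots pq0 roots rs_uniq; rewrite size_map size_iota ltnn.
Qed.

Lemma coef_reciprocal (p q : {poly F}) (d : nat) :
  (forall s, s != 0 -> q.[s] = s ^+ d * p.[s^-1]) ->
  forall j, p`_j = if (j <= d)%N then q`_(d - j) else 0.
Proof.
move=> pq j; move En: (size p) => n.
have XnqE : 'X^n * q = \poly_(i < (d + n).+1) p`_(d + n - i).
  apply: poly_eq_pos_nat => k; set s : F := k.+1%:R.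
  have s0 : s != 0 by rewrite pnatr_eq0.
  rewrite hornerM hornerXn pq // horner_poly (reindex_inj rev_ord_inj) /=.
  rewrite (horner_coef_wide _ (_ : size p <= (d + n).+1)%N); last by lia.
  rewrite !mulr_sumr; apply: eq_bigr => i _.
  rewrite subnS subSKn subKn; last by have := ltn_ord i; lia.
  have E : s ^+ (d + n - i) * s ^+ i = s ^+ n * s ^+ d.
    by rewrite -!exprD subnK 1?addnC //; have := ltn_ord i; lia.
  by rewrite exprVn !mulrA -E; field; rewrite expf_neq0.
have [jn|jn] := leqP (d + n).+1 j.
  by rewrite nth_default; [case: ifP => // jd; exfalso | rewrite En]; lia.
have pj : (\poly_(i < (d + n).+1) p`_(d + n - i))`_(d + n - j) = p`_j.
  by rewrite coef_poly subKn ?ifT //; lia.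
rewrite -pj -XnqE coefXnM.
case: (leqP j d) => jd; last by rewrite ifT //; lia.
by rewrite ifF; [congr q`_ _ | apply/negbTE; rewrite -leqNgt]; lia.
Qed.

End PolyIdentities.

Lemma norm_horner_le1 (F : numDomainType) (p : {poly F}) (t : F) :
  `|t| <= 1 -> `|p.[t]| <= \sum_(i < size p) `|p`_i|.
Proof.
move=> t1; rewrite horner_coef; apply: le_trans (ler_norm_sum _ _ _) _.
apply: ler_sum => i _; rewrite normrM normrX.
by apply: ler_piMr; rewrite ?exprn_ile1.
Qed.

Lemma le0_of_le_small (R : realFieldType) (a K d : R) :
  0 < d -> (forall t, 0 < t -> t < d -> a <= K * t) -> a <= 0.
Proof.
move=> d0 small; rewrite leNgt; apply/negP => a0.
have K1 : 0 < `|K| + 1 by rewrite ltr_wpDl.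
pose t := Num.min d (a / (`|K| + 1)) / 2.
have t0 : 0 < t by rewrite divr_gt0 // lt_min d0 divr_gt0.
have t_le : 2 * t <= d /\ 2 * t <= a / (`|K| + 1).
  by rewrite /t mulrC divfK ?pnatr_eq0 // !ge_min !lexx orbT.
have tK : (`|K| + 1) * (2 * t) <= a.
  by rewrite -ler_pdivlMl // [X in _ <= X]mulrC; case: t_le.
have td : t < d by case: t_le => ? _; lra.
have := small t t0 td.
have := ler_norm K; nra.
Qed.

Section SmallTime.
Variable R : rcfType.
Local Open Scope complex_scope.
Local Notation C := R[i].

Lemma cplxE (r : R) : cplx r = r%:C. Proof. by []. Qed.

Lemma eq0_of_norm_le_small (z K : C) (d : R) : 0 < d -> 0 <= K ->
  (forall t : R, 0 < t -> t < d -> `|z| <= K * t%:C) -> z = 0.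
Proof.
move=> d0 K0 small.
have [k EK] := complex_realP _ (ger0_real K0); subst K.
have [r Ez] := complex_realP _ (ger0_real (normr_ge0 z)).
have r0 : r <= 0.
  apply: (le0_of_le_small (K := k) d0) => t t0 td.
  by rewrite -lecR rmorphM -Ez small.
by apply/normr0_eq0/le_anti; rewrite normr_ge0 andbT Ez -(rmorph0 (real_complex R)) lecR.
Qed.

Lemma bigO_coef0_drop (p : {poly C}) (k : nat) :
  bigO_pow_at0plus (fun t => p.[cplx t]) k.+1 ->
  p`_0 = 0 /\ bigO_pow_at0plus (fun t => (drop_poly 1 p).[cplx t]) k.
Proof.
move=> [K [d [d0 bound]]]; set q := drop_poly 1 p.
have hornerp t : p.[t] = p`_0 + q.[t] * t.
  rewrite -{1}(poly_take_drop 1 p) hornerD hornerM hornerXn expr1.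
  by rewrite /take_poly horner_poly big_ord1 expr0 mulr1.
have p0 : p`_0 = 0.
  pose M := \sum_(i < size q) `|q`_i|.
  apply: (@eq0_of_norm_le_small _ ((`|K|)%:C + M) (Num.min d 1)).
  - by rewrite lt_min d0 ltr01.
  - by rewrite addr_ge0 ?sumr_ge0 // ler0c.
  move=> t t0; rewrite lt_min => /andP[td t1].
  have tC0 : 0 <= t%:C by rewrite ler0c ltW.
  rewrite -[p`_0](addrK (q.[t%:C] * t%:C)) -hornerp mulrDl.
  apply: le_trans (ler_normB _ _) (lerD _ _).
    apply: le_trans (bound t t0 td) _; rewrite cplxE -rmorphM lecR.
    apply: le_trans (ler_norm _) _; rewrite normrM normrX (gtr0_norm t0).
    by rewrite ler_wpM2l // exprS ler_piMr ?exprn_ile1 // ltW.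
  rewrite normrM (ger0_norm tC0) ler_wpM2r // norm_horner_le1 //.
  by rewrite (ger0_norm tC0) lecR ltW.
split=> //; exists K, d; split=> // t t0 td.
have tC0 : 0 < t%:C by rewrite ltcR.
rewrite -(ler_pM2r tC0) -{1}(gtr0_norm tC0) -normrM -[_ * t%:C]add0r -p0 -hornerp.
by apply: le_trans (bound t t0 td) _; rewrite !cplxE -rmorphM exprSr mulrA.
Qed.

Lemma bigO_low_coef (p : {poly C}) (k : nat) :
  bigO_pow_at0plus (fun t => p.[cplx t]) k -> forall j, (j < k)%N -> p`_j = 0.
Proof.
elim: k p => [//|k IH] p /bigO_coef0_drop[p0 /IH q0] [//|j] jk.
by rewrite -addn1 -coef_drop_poly q0.
Qed.

End SmallTime.

Section NullPlanes.
Variables (R : rcfType) (m : nat) (G : 'M[R[i]]_m) (T : tensor4 R[i] m) (k : nat).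
Hypothesis G_sym : G^T = G.
Hypothesis k_gt0 : (0 < k)%N.
Hypothesis null_bigO : forall x y : 'rV[R[i]]_m, qform G x = 0 ->
  bigO_pow_at0plus (fun t => jacobi_trace G T k (x + cplx t *: y)) k.

Local Notation P := (jacobi_trace G T k).
Local Notation Q := (qform G).

Lemma null_line_low_coef x y : Q x = 0 ->
  forall j, (j < k)%N -> (jacobi_trace_poly G T k x y)`_j = 0.
Proof.
move=> Qx; apply: bigO_low_coef.
have [K [d [d0 bound]]] := null_bigO y Qx.
by exists K, d; split=> // t t0 td; rewrite horner_jacobi_trace_poly bound.
Qed.

Lemma jacobi_trace_null_plane u v : Q u = 0 -> Q v = 0 ->
  exists c, forall a b, P (a *: u + b *: v) = c * (a * b) ^+ k.
Proof.
move=> Qu Qv.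
move: (null_line_low_coef v Qu) (null_line_low_coef u Qv).
move: (horner_jacobi_trace_poly G T k u v) (horner_jacobi_trace_poly G T k v u).
move: (jacobi_trace_poly G T k u v) (jacobi_trace_poly G T k v u).
move=> f g Pf Pg f_low g_low.
have gf s : s != 0 -> g.[s] = s ^+ (2 * k) * f.[s^-1].
  move=> s0; rewrite Pf Pg -jacobi_traceZ.
  by rewrite scalerDr scalerA (mulfV s0) scale1r addrC.
have fE : f = f`_k *: 'X^k.
  apply/polyP => j; rewrite coefZ coefXn.
  have [jk|kj|->] := ltngtP j k; rewrite ?mulr0 ?mulr1 //; first exact: f_low.
  by rewrite (coef_reciprocal gf); case: ifP => // j2k; apply: g_low; lia.
exists f`_k => a b; have [->|a0] := eqVneq a 0.
  rewrite scale0r add0r mul0r expr0n gtn_eqF // mulr0.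
  by rewrite jacobi_traceZ -[v]addr0 -(scale0r u) -Pg horner_coef0 g_low // mulr0.
have -> : a *: u + b *: v = a *: (u + (b / a) *: v).
  by rewrite scalerDr scalerA mulrC divfK.
rewrite jacobi_traceZ -Pf {1}fE hornerZ hornerXn.
rewrite mulnC exprM expr_div_n [(a * b) ^+ k]exprMn.
by move: (expf_neq0 k a0); move: (a ^+ k) (b ^+ k) => ak bk ak0; field.
Qed.

Lemma null_plane_ratio u v a0 b0 a1 b1 : Q u = 0 -> Q v = 0 ->
  P (a1 *: u + b1 *: v) * Q (a0 *: u + b0 *: v) ^+ k =
  P (a0 *: u + b0 *: v) * Q (a1 *: u + b1 *: v) ^+ k.
Proof.
move=> Qu Qv; have [c Pc] := jacobi_trace_null_plane Qu Qv.
have Q_plane a b : Q (a *: u + b *: v) = 2 * a * b * ip G u v.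
  by rewrite qformD // !qformZ Qu Qv ipZl ipZr; ring.
by rewrite !Pc !Q_plane -!mulrA -!exprMn; congr (c * _ ^+ k); ring.
Qed.

Lemma null_frame x z : Q x != 0 -> gram_det G x z != 0 ->
  exists u v a0 b0 a1 b1, [/\ Q u = 0, Q v = 0,
    x = a0 *: u + b0 *: v & z = a1 *: u + b1 *: v].
Proof.
move=> Qx gram_xz; set d := sqrtc (- gram_det G x z).
have d2 : d ^+ 2 = - gram_det G x z by rewrite sqr_sqrtc.
have d0 : d != 0 by apply: contra gram_xz => /eqP d0; rewrite -oppr_eq0 -d2 d0 expr0n.
pose al := (d - ip G x z) / Q x; pose u := al *: x + z.
pose c := Q x / (2 * d); pose v := x - c *: u.
have Qu : Q u = 0.
  rewrite /u qformD // qformZ ipZl.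
  have -> : Q z = (ip G x z ^+ 2 - d ^+ 2) / Q x by rewrite d2 /gram_det; field.
  by rewrite /al; field.
have ip_xu : ip G x u = d by rewrite /u ipDr ipZr -/(Q x) /al; field.
have Qv : Q v = 0.
  by rewrite /v qformD // -scaleN1r !qformZ !ipZr ip_xu Qu /c; field.
exists u, v, c, 1, (1 - al * c), (- al).
by split=> //; apply/rowP => i; rewrite /v /u !mxE; ring.
Qed.

Lemma jacobi_trace_ratio_gram x z : Q x != 0 -> gram_det G x z != 0 ->
  P z * Q x ^+ k = P x * Q z ^+ k.
Proof.
move=> Qx gram_xz.
have [u [v [a0 [b0 [a1 [b1 [Qu Qv -> ->]]]]]]] := null_frame Qx gram_xz.
exact: null_plane_ratio.
Qed.

Lemma jacobi_trace_ratio x w z : Q x != 0 -> gram_det G x w != 0 ->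
  P z * Q x ^+ k = P x * Q z ^+ k.
Proof.
move=> Qx gram_xw.
have [b ->] : exists b, z = w + b by exists (z - w); rewrite addrC subrK.
move: (horner_jacobi_trace_poly G T k w b) (horner_qform_poly G_sym w b).
move: (jacobi_trace_poly G T k w b) (qform_poly G w b) => p q Pp Qq.
pose dp := (Q x)%:P * q - ((ip G x w)%:P + ip G x b *: 'X) ^+ 2.
have dpE s : dp.[s] = gram_det G x (w + s *: b).
  (* Generalizing the scalars keeps rewriting from unfolding the forms. *)
  rewrite /gram_det ipDr ipZr -Qq /dp; move: (Q x) (ip G x w) (ip G x b) => A B C.
  by rewrite !hornerE; ring.
pose hp := p * (Q x ^+ k)%:P - (P x)%:P * q ^+ k.
have hpE s : hp.[s] = P (w + s *: b) * Q x ^+ k - P x * Q (w + s *: b) ^+ k.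
  rewrite -Pp -Qq /hp; move: (Q x ^+ k) (P x) => A B.
  by rewrite !hornerE.
have hp_dp : hp * dp = 0.
  apply: poly_eq_pos_nat => n; rewrite hornerM horner0 hpE dpE.
  have [->|gram_n] := eqVneq (gram_det G x (w + n.+1%:R *: b)) 0; first by rewrite mulr0.
  by rewrite (jacobi_trace_ratio_gram Qx gram_n) subrr mul0r.
have dp0 : dp != 0.
  by apply: contraNneq gram_xw => dp0; rewrite -[w]addr0 -(scale0r b) -dpE dp0 horner0.
move/eqP: hp_dp; rewrite mulf_eq0 (negbTE dp0) orbF => /eqP/(congr1 (horner^~ 1)).
by rewrite hpE horner0 scale1r => /eqP; rewrite subr_eq0 => /eqP.
Qed.

End NullPlanes.

Section Complexification.
Variables (R : rcfType) (m : nat) (G : 'M[R]_m) (T : tensor4 R m).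
Local Open Scope complex_scope.
Local Notation GC := (cplx_mx G).
Local Notation TC := (cplx_tensor T).

Lemma cplx_jacobi_trace k x :
  jacobi_trace GC TC k (cplx_mx x) = cplx (jacobi_trace G T k x).
Proof. exact/esym/(map_jacobi_trace (real_complex R)). Qed.

Lemma cplx_ip (S : 'M[R]_m) x y :
  ip (cplx_mx S) (cplx_mx x) (cplx_mx y) = cplx (ip S x y).
Proof. exact/esym/(map_ip (real_complex R)). Qed.

Lemma cplx_qform x : qform GC (cplx_mx x) = cplx (qform G x).
Proof. exact: cplx_ip. Qed.

Lemma cplx_gram_det x y : gram_det GC (cplx_mx x) (cplx_mx y) = cplx (gram_det G x y).
Proof. by rewrite /gram_det !cplx_qform cplx_ip !cplxE -rmorphXn -rmorphM -rmorphB. Qed.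

Hypothesis G_sym : G^T = G.

Lemma cplx_mx_sym : GC^T = GC.
Proof. by rewrite /cplx_mx map_trmx G_sym. Qed.

Lemma osserman_complexify (c : R) k :
  (forall x, jacobi_trace G T k x = c * qform G x ^+ k) ->
  forall z, jacobi_trace GC TC k z = cplx c * qform GC z ^+ k.
Proof.
move=> Pc z; set a := map_mx (@complex.Re R) z; set b := map_mx (@complex.Im R) z.
have zE : z = cplx_mx a + 'i *: cplx_mx b.
  by apply/rowP => j; rewrite !mxE [LHS]complexE.
have real_line (s : R) : cplx_mx a + s%:C *: cplx_mx b = cplx_mx (a + s *: b).
  by apply/rowP => j; rewrite !mxE !cplxE rmorphD rmorphM.
move: (horner_jacobi_trace_poly GC TC k (cplx_mx a) (cplx_mx b)).
move: (horner_qform_poly cplx_mx_sym (cplx_mx a) (cplx_mx b)).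
move: (jacobi_trace_poly GC TC k (cplx_mx a) (cplx_mx b)).
move: (qform_poly GC (cplx_mx a) (cplx_mx b)) => q p Qq Pp.
have pE : p = (cplx c)%:P * q ^+ k.
  apply: poly_eq_pos_nat => n; rewrite hornerM hornerC horner_exp Pp Qq.
  rewrite -(rmorph_nat (real_complex R)) real_line cplx_jacobi_trace /qform cplx_ip Pc.
  by rewrite !cplxE rmorphM rmorphXn.
by rewrite zE -Pp pE hornerM hornerC horner_exp Qq.
Qed.

Lemma osserman_null_bigO (c : R) k x y :
  (forall z, jacobi_trace GC TC k z = cplx c * qform GC z ^+ k) -> qform GC x = 0 ->
  bigO_pow_at0plus (fun t => jacobi_trace GC TC k (x + cplx t *: y)) k.
Proof.
move=> Pc Qx; set B := 2 * `|ip GC x y| + `|qform GC y|.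
have [K KE] : exists K, `|cplx c| * B ^+ k = K%:C.
  by apply/complex_realP/ger0_real; rewrite mulr_ge0 ?exprn_ge0 ?addr_ge0 ?mulr_ge0.
exists K, 1; split=> [|t t0 t1]; first exact: ltr01.
have t0C : 0 <= t%:C by rewrite ler0c ltW.
have Q_line : qform GC (x + cplx t *: y) = t%:C * (2 * ip GC x y + t%:C * qform GC y).
  by rewrite qformD ?cplx_mx_sym // qformZ ipZr Qx cplxE; ring.
have -> : cplx (K * t ^+ k) = `|cplx c| * B ^+ k * t%:C ^+ k.
  by rewrite KE cplxE rmorphM rmorphXn.
rewrite Pc Q_line exprMn normrM -mulrA ler_wpM2l //.
rewrite normrM !normrX (ger0_norm t0C) mulrC ler_wpM2r ?exprn_ge0 //.
rewrite lerXn2r ?nnegrE ?addr_ge0 ?mulr_ge0 //.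
apply: le_trans (ler_normD _ _) (lerD _ _); first by rewrite normrM normr_nat.
by rewrite normrM (ger0_norm t0C) ler_piMl // lecR ltW.
Qed.

End Complexification.

Lemma osserman_of_null_bigO (R : rcfType) (m : nat) (G : 'M[R]_m) (T : tensor4 R m) :
  (2 <= m)%N -> G^T = G -> G \in unitmx ->
  (forall x y : 'rV[R[i]]_m, qform (cplx_mx G) x = 0 -> forall k, (1 <= k)%N ->
     bigO_pow_at0plus
       (fun t => jacobi_trace (cplx_mx G) (cplx_tensor T) k (x + cplx t *: y)) k) ->
  osserman1 G T.
Proof.
move=> m2 G_sym G_unit null_bigO.
have G0 : G != 0.
  by apply: contraTneq m2 => G0; move: (mxrank_unit G_unit); rewrite G0 mxrank0 => <-.
have [x0 Qx0] := exists_qform_neq0 G_sym G0.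
have [w gram_x0w] := exists_gram_det_neq0 m2 G_sym G_unit Qx0.
exists (fun k => jacobi_trace G T k x0 / qform G x0 ^+ k) => k x /=.
have Qx0k : qform G x0 ^+ k != 0 by rewrite expf_neq0.
case: k Qx0k => [|k] Qx0k; first by rewrite /jacobi_trace !expr0 divr1 mulr1.
apply: (mulIf Qx0k); rewrite mulrAC divfK //.
have Qx0C : qform (cplx_mx G) (cplx_mx x0) != 0 by rewrite cplx_qform cplxE fmorph_eq0.
have gramC : gram_det (cplx_mx G) (cplx_mx x0) (cplx_mx w) != 0.
  by rewrite cplx_gram_det cplxE fmorph_eq0.
have := jacobi_trace_ratio (cplx_mx_sym G_sym) (ltn0Sn k)
  (fun x y Qx => null_bigO x y Qx k.+1 isT) (cplx_mx x) Qx0C gramC.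
by rewrite !cplx_jacobi_trace !cplx_qform !cplxE -!rmorphXn -!rmorphM => /complexI.
Qed.

Unset Implicit Arguments.

Theorem lemma2p2 (R : realType) (m : nat) (G : 'M[R]_m) (T : tensor4 R m) :
  (3 <= m)%N -> nondeg_sym_form G -> is_act T ->
  (osserman1 G T <->
   forall (x y : 'rV[R[i]]_m),
     ip (cplx_mx G) x x = 0 ->
     forall k : nat, (1 <= k)%N ->
       bigO_pow_at0plus
         (fun t : R => \tr (jacobi_op (cplx_mx G) (cplx_tensor T)
                                       (x + cplx t *: y) ^+ k)) k).
Proof.
move=> m3 [G_sym G_unit] _; split.
  move=> [c Pc] x y Qx k _.
  exact: (osserman_null_bigO G_sym y (osserman_complexify G_sym (Pc k)) Qx).
by apply: osserman_of_null_bigO => //; apply: ltnW.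
Qed.
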